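(* Let $I\subseteq\mathbb{R}$ be an open interval and let $f$ be a non-constant real analytic function on $I$ with $f(\mathbb{Q}\cap I)\subseteq\mathbb{Q}$. Assume that there exists a function $\psi:\mathbb{R}_{>0}\to\mathbb{R}_{>0}$ with the following properties: (i) $\psi(m)=o(m)$ as $m\to\infty$; (ii) for every $\zeta\in\mathscr{L}\cap I$ and every integer $m\geq 1$ one can find coprime integers $p_m,q_m\geq 2$ such that $\left|\zeta-\frac{p_m}{q_m}\right|\leq q_m^{-m}$ and, writing $f(p_m/q_m)=p_m'/q_m'$ in lowest terms, one has $q_m'\leq q_m^{\psi(m)}$. Then $f(\mathscr{L}\cap I)\subseteq\mathscr{L}$.
   Context: $\mathscr{L}$ denotes the set of Liouville numbers: real irrational numbers $\zeta$ such that for every $\eta>0$ the inequality $|\zeta-y/x|\leq x^{-\eta}$ has infinitely many rational solutions $y/x$ with $x\geq 1$ (equivalently, real numbers with infinite irrationality exponent). For a set $A$, $f(A)=\{f(x):x\in A\}$. *)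

From Stdlib Require Import Reals ZArith.
From Coquelicot Require Import Coquelicot.
Open Scope R_scope.

Definition in_interval (a b : Rbar) (x : R) : Prop :=
  Rbar_lt a x /\ Rbar_lt x b.

Definition real_analytic_on (a b : Rbar) (f : R -> R) : Prop :=
  forall x0, in_interval a b x0 ->
    exists (c : nat -> R) (r : R), 0 < r /\
      forall x, Rabs (x - x0) < r -> is_pseries c (x - x0) (f x).

Definition is_rational (x : R) : Prop :=
  exists (p q : Z), q <> 0%Z /\ x = IZR p / IZR q.

(* Liouville numbers: irrational zeta such that for every eta > 0 the
   inequality |zeta - y/x| <= x^(-eta) has infinitely many rational solutions
   y/x with x >= 1, i.e. solutions (x,y) with arbitrarily large x. *)
Definition Liouville (zeta : R) : Prop :=
  ~ is_rational zeta /\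
  forall eta : R, 0 < eta ->
    forall N : Z, exists x y : Z, (1 <= x)%Z /\ (N < x)%Z /\
      Rabs (zeta - IZR y / IZR x) <= Rpower (IZR x) (- eta).

(* Near the Liouville number [zeta] the analytic function [f] is Lipschitz,
   so each approximation [|zeta - p/q| <= q^-m] from (ii) yields
   [|f zeta - p'/q'| <= K q^-m] with [q' <= q^psi(m)] and [psi(m) = o(m)]:
   measured in [q'], [f zeta] is approximated to every order.  It cannot be
   rational, since [f zeta = A/B] would force [f (p/q) = f zeta] for points
   [p/q <> zeta] tending to [zeta] (two distinct fractions differ by at least
   [1/(q' B)]), and by the identity theorem [f] would be constant. *)

From Stdlib Require Import Reals ZArith Lra Lia Classical.
From Coquelicot Require Import Coquelicot.
Open Scope R_scope.

Definition clusters_at0 (P : R -> Prop) : Prop :=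
  forall eps, 0 < eps -> exists h, h <> 0 /\ Rabs h < eps /\ P h.

Lemma clusters_at0_mono_near {P Q : R -> Prop} r :
  clusters_at0 P -> 0 < r ->
  (forall h, h <> 0 -> Rabs h < r -> P h -> Q h) -> clusters_at0 Q.
Proof.
  intros HP Hr HPQ eps Heps.
  destruct (HP (Rmin eps r)) as [h [Hh0 [Hh HPh]]]; [now apply Rmin_pos|].
  pose proof (Rmin_l eps r); pose proof (Rmin_r eps r).
  exists h; repeat split; auto; [lra|].
  apply HPQ; auto; lra.
Qed.

Lemma clusters_at0_ray (P : R -> Prop) s d : Rabs s = 1 -> 0 < d ->
  (forall t, 0 < t < d -> P (s * t)) -> clusters_at0 P.
Proof.
  intros Hs Hd HP eps Heps.
  pose proof (Rmin_l eps d); pose proof (Rmin_r eps d).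
  assert (Hm : 0 < Rmin eps d) by now apply Rmin_pos.
  exists (s * (Rmin eps d / 2)); repeat split.
  - apply Rmult_integral_contrapositive_currified; [|lra].
    intros ->; rewrite Rabs_R0 in Hs; lra.
  - rewrite Rabs_mult, Hs, Rabs_pos_eq; lra.
  - apply HP; lra.
Qed.

Lemma continuity_pt_eq_of_clusters g v :
  continuity_pt g 0 -> clusters_at0 (fun h => g h = v) -> g 0 = v.
Proof.
  intros Hg Hcl.
  destruct (Req_dec (g 0) v) as [E|E]; [exact E|exfalso].
  destruct (Hg (Rabs (g 0 - v))) as [alp [Halp Hclose]].
  { apply Rabs_pos_lt; lra. }
  destruct (Hcl alp Halp) as [h [Hh0 [Hh Hgh]]].
  assert (Hd : dist R_met (g h) (g 0) < Rabs (g 0 - v)).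
  { apply Hclose; split; [split; [exact I | now apply not_eq_sym]|].
    simpl; unfold R_dist; now rewrite Rminus_0_r. }
  simpl in Hd; unfold R_dist in Hd.
  rewrite Hgh, Rabs_minus_sym in Hd; lra.
Qed.

Lemma continuity_pt_bounded_near g : continuity_pt g 0 ->
  exists K d, 0 < K /\ 0 < d /\ forall h, Rabs h < d -> Rabs (g h) <= K.
Proof.
  intros Hg.
  destruct (Hg 1 Rlt_0_1) as [d [Hd Hclose]].
  exists (Rabs (g 0) + 1), d; split; [pose proof (Rabs_pos (g 0)); lra|].
  split; [exact Hd|]; intros h Hh.
  assert (Hgh : Rabs (g h - g 0) <= 1).
  { destruct (Req_dec h 0) as [->|Hh0]; [rewrite Rminus_diag, Rabs_R0; lra|].
    left; apply (Hclose h); split; [split; [exact I | now apply not_eq_sym]|].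
    simpl; unfold R_dist; now rewrite Rminus_0_r. }
  pose proof (Rabs_triang (g h - g 0) (g 0)).
  replace (g h - g 0 + g 0) with (g h) in * by ring; lra.
Qed.

Lemma ex_pseries_CV_radius_le c x : ex_pseries c x -> Rbar_le (Rabs x) (CV_radius c).
Proof.
  intros [l Hl].
  apply Rbar_not_lt_le; intro Hout.
  apply (CV_disk_outside c x Hout).
  assert (Hex : ex_series (fun k => scal (pow_n x k) (c k))) by (exists l; exact Hl).
  eapply is_lim_seq_ext; [|exact (ex_series_lim_0 _ Hex)].
  intro n; simpl; rewrite pow_n_pow; unfold scal; simpl; unfold mult; simpl; ring.
Qed.

Lemma PSeries_coef0_eq a v : Rbar_lt 0 (CV_radius a) ->
  clusters_at0 (fun h => PSeries a h = v) -> a O = v.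
Proof.
  intros Hr Hcl; rewrite <- PSeries_0.
  apply continuity_pt_eq_of_clusters; [|exact Hcl].
  apply PSeries_continuity; now rewrite Rabs_R0.
Qed.

Lemma PSeries_coef_eq0 a : Rbar_lt 0 (CV_radius a) ->
  clusters_at0 (fun h => PSeries a h = 0) -> forall n, a n = 0.
Proof.
  intros Hr Hcl n; revert a Hr Hcl; induction n as [|n IH]; intros a Hr Hcl.
  - exact (PSeries_coef0_eq a 0 Hr Hcl).
  - change (a (S n)) with (PS_decr_1 a n).
    apply IH; [now rewrite CV_radius_decr_1|].
    apply (clusters_at0_mono_near 1 Hcl Rlt_0_1).
    intros h Hh0 _ Hh.
    rewrite (PSeries_decr_1_aux a h (PSeries_coef0_eq a 0 Hr Hcl)) in Hh.
    now destruct (Rmult_integral _ _ Hh).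
Qed.

Section PowerSeriesNearCentre.
Variables (c : nat -> R) (r : R).
Hypothesis r_pos : 0 < r.
Hypothesis c_converges : forall h, Rabs h < r -> ex_pseries c h.

Lemma CV_radius_pos_of_converges : Rbar_lt 0 (CV_radius c).
Proof.
  eapply Rbar_lt_le_trans; [|apply ex_pseries_CV_radius_le, (c_converges (r / 2))];
  rewrite Rabs_pos_eq; simpl; lra.
Qed.

Lemma PSeries_const_of_clusters v :
  clusters_at0 (fun h => PSeries c h = v) ->
  forall h, Rabs h < r -> PSeries c h = v.
Proof.
  intros Hcl.
  pose proof CV_radius_pos_of_converges as Hr.
  assert (Hc0 : c O = v) by exact (PSeries_coef0_eq c v Hr Hcl).
  assert (Hdecr : forall n, PS_decr_1 c n = 0).
  { apply PSeries_coef_eq0; [now rewrite CV_radius_decr_1|].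
    apply (clusters_at0_mono_near r Hcl r_pos).
    intros h Hh0 Hh Hv.
    rewrite (PSeries_decr_1 c h (c_converges h Hh)), Hc0 in Hv.
    assert (Hprod : h * PSeries (PS_decr_1 c) h = 0) by lra.
    now destruct (Rmult_integral _ _ Hprod). }
  intros h Hh.
  rewrite (PSeries_decr_1 c h (c_converges h Hh)), (PSeries_ext _ _ h Hdecr).
  rewrite PSeries_const_0, Hc0; ring.
Qed.

Lemma PSeries_lipschitz_at_centre : exists K d, 0 < K /\ 0 < d /\
  forall h, Rabs h < d -> Rabs (PSeries c h - PSeries c 0) <= K * Rabs h.
Proof.
  assert (Hcont : continuity_pt (PSeries (PS_decr_1 c)) 0).
  { apply PSeries_continuity.
    rewrite CV_radius_decr_1, Rabs_R0; exact CV_radius_pos_of_converges. }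
  destruct (continuity_pt_bounded_near _ Hcont) as [K [d [HK [Hd Hbound]]]].
  exists K, (Rmin d r); split; [exact HK|]; split; [now apply Rmin_pos|].
  intros h Hh; pose proof (Rmin_l d r); pose proof (Rmin_r d r).
  rewrite PSeries_0, (PSeries_decr_1 c h (c_converges h ltac:(lra))).
  replace (c O + h * PSeries (PS_decr_1 c) h - c O)
    with (h * PSeries (PS_decr_1 c) h) by ring.
  rewrite Rabs_mult, Rmult_comm.
  apply Rmult_le_compat_r; [apply Rabs_pos|apply Hbound; lra].
Qed.

End PowerSeriesNearCentre.

Lemma real_analytic_on_expansion a b f x0 :
  real_analytic_on a b f -> in_interval a b x0 ->
  exists c r, 0 < r /\ forall h, Rabs h < r ->
    ex_pseries c h /\ f (x0 + h) = PSeries c h.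
Proof.
  intros Hf Hx0; destruct (Hf x0 Hx0) as [c [r [Hr Hc]]].
  exists c, r; split; [exact Hr|]; intros h Hh.
  assert (Hs : is_pseries c h (f (x0 + h))).
  { replace h with (x0 + h - x0) at 1 by ring; apply Hc.
    now replace (x0 + h - x0) with h by ring. }
  split; [now exists (f (x0 + h))|symmetry; now apply is_pseries_unique].
Qed.

Lemma real_analytic_locally_const a b f x0 v :
  real_analytic_on a b f -> in_interval a b x0 ->
  clusters_at0 (fun h => f (x0 + h) = v) ->
  exists r, 0 < r /\ forall y, Rabs (y - x0) < r -> f y = v.
Proof.
  intros Hf Hx0 Hcl.
  destruct (real_analytic_on_expansion a b f x0 Hf Hx0) as [c [r [Hr Hc]]].
  assert (Hconst : forall h, Rabs h < r -> PSeries c h = v).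
  { apply (PSeries_const_of_clusters c r Hr (fun h Hh => proj1 (Hc h Hh))).
    apply (clusters_at0_mono_near r Hcl Hr).
    intros h _ Hh Hv; now rewrite <- (proj2 (Hc h Hh)). }
  exists r; split; [exact Hr|]; intros y Hy.
  replace y with (x0 + (y - x0)) by ring.
  rewrite (proj2 (Hc _ Hy)); now apply Hconst.
Qed.

Lemma real_analytic_locally_lipschitz a b f x0 :
  real_analytic_on a b f -> in_interval a b x0 ->
  exists K d, 0 < K /\ 0 < d /\
    forall h, Rabs h < d -> Rabs (f (x0 + h) - f x0) <= K * Rabs h.
Proof.
  intros Hf Hx0.
  destruct (real_analytic_on_expansion a b f x0 Hf Hx0) as [c [r [Hr Hc]]].
  destruct (PSeries_lipschitz_at_centre c r Hr (fun h Hh => proj1 (Hc h Hh)))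
    as [K [d [HK [Hd Hlip]]]].
  exists K, (Rmin d r); split; [exact HK|]; split; [now apply Rmin_pos|].
  intros h Hh; pose proof (Rmin_l d r); pose proof (Rmin_r d r).
  assert (Hr0 : Rabs 0 < r) by (rewrite Rabs_R0; exact Hr).
  assert (Hfx0 : f x0 = PSeries c 0) by (rewrite <- (proj2 (Hc 0 Hr0)), Rplus_0_r; reflexivity).
  rewrite (proj2 (Hc h ltac:(lra))), Hfx0; apply Hlip; lra.
Qed.

Lemma real_induction (P : R -> Prop) z w : z <= w ->
  (forall x, z <= x <= w -> (forall y, z <= y < x -> P y) ->
     exists r, 0 < r /\ forall y, Rabs (y - x) < r -> P y) ->
  forall y, z <= y <= w -> P y.
Proof.
  intros Hzw Hstep.
  pose (E t := t <= w /\ forall y, z <= y <= t -> P y).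
  assert (HEz : E z).
  { split; [exact Hzw|]; intros y Hy.
    destruct (Hstep z ltac:(lra) ltac:(intros; lra)) as [r [Hr HP]].
    apply HP; replace (y - z) with 0 by lra; rewrite Rabs_R0; exact Hr. }
  destruct (completeness E) as [s [Hub Hlub]].
  { exists w; intros t Ht; apply Ht. }
  { now exists z. }
  assert (Hzs : z <= s) by now apply Hub.
  assert (Hsw : s <= w) by (apply Hlub; intros t Ht; apply Ht).
  assert (Hbelow : forall y, z <= y < s -> P y).
  { intros y Hy; apply NNPP; intro HPy.
    assert (Hsy : s <= y); [|lra].
    apply Hlub; intros t [_ Ht]; apply Rnot_lt_le; intro Hyt.
    apply HPy, Ht; lra. }
  destruct (Hstep s ltac:(lra) Hbelow) as [r [Hr HP]].
  assert (Hnear : forall y, z <= y <= Rmin (s + r / 2) w -> P y).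
  { intros y Hy; pose proof (Rmin_l (s + r / 2) w).
    destruct (Rlt_le_dec y s); [apply Hbelow; lra|].
    apply HP; rewrite Rabs_pos_eq; lra. }
  assert (Hmin : Rmin (s + r / 2) w <= s) by (apply Hub; split; [apply Rmin_r|exact Hnear]).
  assert (Hws : w <= s).
  { revert Hmin; unfold Rmin; destruct (Rle_dec (s + r / 2) w); lra. }
  intros y Hy; apply Hnear; pose proof (Rmin_r (s + r / 2) w).
  revert Hy; unfold Rmin; destruct (Rle_dec (s + r / 2) w); lra.
Qed.

Lemma in_interval_between a b x y u :
  in_interval a b x -> in_interval a b y -> (x <= u <= y \/ y <= u <= x) ->
  in_interval a b u.
Proof.
  unfold in_interval; destruct a as [a| |], b as [b| |]; simpl;
  intros [Hxa Hxb] [Hya Hyb] Hu; split; auto; lra.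
Qed.

Theorem real_analytic_identity a b f z v :
  real_analytic_on a b f -> in_interval a b z ->
  clusters_at0 (fun h => f (z + h) = v) ->
  forall w, in_interval a b w -> f w = v.
Proof.
  intros Hf Hz Hcl w Hw.
  set (s := if Rle_dec z w then 1 else -1).
  assert (Hs : Rabs s = 1).
  { unfold s; destruct (Rle_dec z w); [apply Rabs_R1|rewrite Rabs_left; lra]. }
  assert (Hw_eq : w = z + s * Rabs (w - z)).
  { unfold s; destruct (Rle_dec z w); [rewrite Rabs_pos_eq|rewrite Rabs_left]; lra. }
  assert (Hseg : forall x, 0 <= x <= Rabs (w - z) -> in_interval a b (z + s * x)).
  { intros x Hx; apply (in_interval_between a b z w); auto.
    revert Hw_eq; unfold s; destruct (Rle_dec z w); intros; nra. }
  rewrite Hw_eq.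
  apply (real_induction (fun t => f (z + s * t) = v) 0 (Rabs (w - z)));
    [apply Rabs_pos| |split; [apply Rabs_pos|apply Rle_refl]].
  intros x Hx Hbelow.
  assert (Hclx : clusters_at0 (fun h => f (z + s * x + h) = v)).
  { destruct (Req_dec x 0) as [->|Hx0].
    - now rewrite Rmult_0_r, Rplus_0_r.
    - apply (clusters_at0_ray _ (- s) x); [now rewrite Rabs_Ropp|lra|].
      intros t Ht; replace (z + s * x + - s * t) with (z + s * (x - t)) by ring.
      apply Hbelow; lra. }
  destruct (real_analytic_locally_const a b f _ v Hf (Hseg x Hx) Hclx) as [r [Hr Hloc]].
  exists r; split; [exact Hr|]; intros y Hy; apply Hloc.
  replace (z + s * y - (z + s * x)) with (s * (y - x)) by ring.
  now rewrite Rabs_mult, Hs, Rmult_1_l.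
Qed.

Lemma rational_gap (p q r s : Z) : (1 <= q)%Z -> s <> 0%Z ->
  IZR p / IZR q <> IZR r / IZR s ->
  1 <= Rabs (IZR p / IZR q - IZR r / IZR s) * (IZR q * Rabs (IZR s)).
Proof.
  intros Hq Hs Hne.
  assert (Hq1 : 1 <= IZR q) by now apply IZR_le.
  assert (Hs0 : IZR s <> 0) by now apply not_0_IZR.
  assert (Hnum : IZR (p * s - r * q) = (IZR p / IZR q - IZR r / IZR s) * (IZR q * IZR s)).
  { rewrite minus_IZR, !mult_IZR; field; lra. }
  assert (Hnz : (p * s - r * q)%Z <> 0%Z).
  { intro E; apply Hne; apply (f_equal IZR) in E; rewrite Hnum in E.
    apply Rmult_integral in E as [E|E]; [lra|].
    exfalso; apply Rmult_integral in E as [E|E]; lra. }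
  assert (Hge1 : 1 <= Rabs (IZR (p * s - r * q))).
  { rewrite <- abs_IZR; apply IZR_le; lia. }
  rewrite Hnum, !Rabs_mult, (Rabs_pos_eq (IZR q)) in Hge1 by lra.
  exact Hge1.
Qed.

Lemma irrational_far_from_denominator t q : ~ is_rational t -> (1 <= q)%Z ->
  exists eps, 0 < eps /\ forall p : Z, eps <= Rabs (t - IZR p / IZR q).
Proof.
  intros Ht Hq.
  assert (Hq0 : 0 < IZR q) by (apply IZR_lt; lia).
  set (u := IZR q * t); set (k := (up u - 1)%Z).
  destruct (archimed u) as [Hup1 Hup2].
  assert (Hk : IZR k = IZR (up u) - 1) by (unfold k; now rewrite minus_IZR).
  assert (Huk : u <> IZR k).
  { intro E; apply Ht; exists k, q; split; [lia|].
    rewrite <- E; unfold u; field; lra. }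
  set (gap := Rmin (u - IZR k) (IZR k + 1 - u)).
  pose proof (Rmin_l (u - IZR k) (IZR k + 1 - u)) as Hgap1.
  pose proof (Rmin_r (u - IZR k) (IZR k + 1 - u)) as Hgap2.
  assert (Hgap : 0 < gap) by (unfold gap; apply Rmin_pos; lra).
  exists (gap / IZR q); split; [now apply Rdiv_lt_0_compat|]; intro p.
  replace (t - IZR p / IZR q) with ((u - IZR p) / IZR q) by (unfold u; field; lra).
  unfold Rdiv; rewrite Rabs_mult, (Rabs_pos_eq (/ IZR q)) by (left; now apply Rinv_0_lt_compat).
  apply Rmult_le_compat_r; [left; now apply Rinv_0_lt_compat|].
  destruct (Z_le_gt_dec p k) as [Hp|Hp].
  - apply IZR_le in Hp; rewrite Rabs_pos_eq; fold gap in Hgap1; lra.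
  - assert (Hp1 : (k + 1 <= p)%Z) by lia.
    apply IZR_le in Hp1; rewrite plus_IZR in Hp1.
    rewrite Rabs_left; fold gap in Hgap2; lra.
Qed.

Lemma irrational_far_from_small_denominators t : ~ is_rational t ->
  forall n : nat, exists eps, 0 < eps /\
    forall p q : Z, (1 <= q <= Z.of_nat n)%Z -> eps <= Rabs (t - IZR p / IZR q).
Proof.
  intros Ht n; induction n as [|n [eps [Heps IH]]].
  - exists 1; split; [lra|]; intros p q Hq; lia.
  - destruct (irrational_far_from_denominator t (Z.of_nat (S n)) Ht)
      as [eps' [Heps' Hfar]]; [lia|].
    exists (Rmin eps eps'); split; [now apply Rmin_pos|]; intros p q Hq.
    destruct (Z.eq_dec q (Z.of_nat (S n))) as [->|Hqn].
    + eapply Rle_trans; [apply Rmin_r|apply Hfar].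
    + eapply Rle_trans; [apply Rmin_l|apply IH; lia].
Qed.

Lemma eventually_INR_gt C : eventually (fun m => C < INR m).
Proof.
  destruct (archimed (Rmax C 0)) as [Hup _].
  pose proof (Rmax_l C 0); pose proof (Rmax_r C 0).
  exists (Z.to_nat (up (Rmax C 0))); intros n Hn.
  apply le_INR in Hn; rewrite INR_IZR_INZ, Z2Nat.id in Hn; [lra|].
  apply le_IZR; lra.
Qed.

Lemma INR_lt_pow2 m : INR m < 2 ^ m.
Proof.
  induction m as [|m IH]; [simpl; lra|].
  rewrite S_INR, <- tech_pow_Rmult; pose proof (pow_R1_Rle 2 m); lra.
Qed.

Lemma eventually_inv_pow2_lt x : 0 < x -> eventually (fun m => / 2 ^ m < x).
Proof.
  intros Hx; apply (filter_imp (fun m => / x < INR m)); [|apply eventually_INR_gt].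
  intros m Hm; pose proof (INR_lt_pow2 m); pose proof (Rinv_0_lt_compat x Hx).
  rewrite <- (Rinv_inv x); apply Rinv_lt_contravar; [apply Rmult_lt_0_compat|]; lra.
Qed.

Lemma eventually_little_o (psi : R -> R) c :
  is_lim (fun x => psi x / x) p_infty 0 -> 0 < c ->
  eventually (fun m => psi (INR m) <= c * INR m).
Proof.
  intros Hpsi Hc.
  assert (Hlim : is_lim_seq (fun m => psi (INR m) / INR m) 0)
    by exact (filterlim_comp _ _ _ _ _ _ _ _ is_lim_seq_INR Hpsi).
  apply is_lim_seq_spec in Hlim; destruct (Hlim (mkposreal c Hc)) as [N HN].
  apply (filter_imp (fun m => (N <= m)%nat /\ 0 < INR m));
    [|apply filter_and; [now exists N|apply eventually_INR_gt]].
  intros m [Hm Hpos]; specialize (HN m Hm); simpl in HN.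
  rewrite Rminus_0_r in HN; apply Rabs_lt_between in HN.
  apply (Rmult_le_reg_r (/ INR m)); [now apply Rinv_0_lt_compat|].
  rewrite Rmult_assoc, Rinv_r, Rmult_1_r by lra; unfold Rdiv in HN; lra.
Qed.

Lemma ln2_pos : 0 < ln 2.
Proof. rewrite <- ln_1; apply ln_increasing; lra. Qed.

(* Since [q ^ x = exp (x ln q) >= 1 + x ln 2]. *)
Lemma Rpower_half_gt C q x : 2 <= q -> 2 * C / ln 2 < x -> C < Rpower q (x / 2).
Proof.
  intros Hq Hx; pose proof ln2_pos as Hln2.
  assert (Hlnq : ln 2 <= ln q).
  { destruct (Req_dec q 2) as [->|]; [lra|left; apply ln_increasing; lra]. }
  assert (HCx : C < x / 2 * ln 2).
  { apply (Rmult_lt_compat_r (ln 2)) in Hx; [|exact Hln2].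
    unfold Rdiv in Hx; rewrite Rmult_assoc, Rinv_l in Hx; lra. }
  destruct (Rle_dec 0 x) as [Hx0|Hx0].
  - unfold Rpower; eapply Rlt_le_trans; [|apply exp_ineq1_le]; nra.
  - pose proof (exp_pos (x / 2 * ln q)); unfold Rpower; nra.
Qed.

Lemma pow_Rpower_half q m : 0 < q -> q ^ m = Rpower q (INR m / 2) * Rpower q (INR m / 2).
Proof.
  intros Hq; rewrite <- Rpower_plus, <- Rpower_pow by exact Hq; f_equal; field.
Qed.

Lemma div_square_lt_inv C P Y : 0 < Y -> Y <= P -> C < P -> C / (P * P) < / Y.
Proof.
  intros HY HYP HCP.
  apply (Rlt_le_trans _ (/ P)); [|apply Rinv_le_contravar; lra].
  replace (/ P) with (P / (P * P)) by (field; lra).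
  apply Rmult_lt_compat_r; [apply Rinv_0_lt_compat; nra|exact HCP].
Qed.

Section ImageOfLiouvilleNumber.
Variables (f psi : R -> R) (zeta K d : R).
Hypothesis K_pos : 0 < K.
Hypothesis d_pos : 0 < d.
Hypothesis f_lipschitz :
  forall h, Rabs h < d -> Rabs (f (zeta + h) - f zeta) <= K * Rabs h.
Hypothesis zeta_irrational : ~ is_rational zeta.
Hypothesis psi_little_o : is_lim (fun x => psi x / x) p_infty 0.
Hypothesis zeta_approx : forall m : nat, (1 <= m)%nat ->
  exists p q : Z, (2 <= q)%Z /\ Rabs (zeta - IZR p / IZR q) <= / IZR q ^ m /\
    exists p' q' : Z, (1 <= q')%Z /\ f (IZR p / IZR q) = IZR p' / IZR q' /\
      IZR q' <= Rpower (IZR q) (psi (INR m)).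

Lemma image_approximation (m : nat) : (1 <= m)%nat -> / 2 ^ m < d ->
  exists (q p' q' : Z) (h : R), (2 <= q)%Z /\ (1 <= q')%Z /\
    h <> 0 /\ Rabs h <= / 2 ^ m /\ f (zeta + h) = IZR p' / IZR q' /\
    Rabs (f zeta - IZR p' / IZR q') <= K / IZR q ^ m /\
    IZR q' <= Rpower (IZR q) (psi (INR m)).
Proof.
  intros Hm Hmd.
  destruct (zeta_approx m Hm) as [p [q [Hq [Hpq [p' [q' [Hq' [Hfpq Hq'q]]]]]]]].
  assert (Hq2 : 2 <= IZR q) by now apply IZR_le.
  assert (Hqm : / IZR q ^ m <= / 2 ^ m).
  { apply Rinv_le_contravar; [apply pow_lt; lra|apply pow_incr; lra]. }
  assert (Hpow : 0 < IZR q ^ m) by (apply pow_lt; lra).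
  set (h := IZR p / IZR q - zeta).
  assert (Hh : Rabs h <= / IZR q ^ m) by (unfold h; now rewrite Rabs_minus_sym).
  exists q, p', q', h; repeat split; auto; [|lra| |].
  - intro E; apply zeta_irrational; exists p, q; split; [lia|unfold h in E; lra].
  - now replace (zeta + h) with (IZR p / IZR q) by (unfold h; ring).
  - replace (IZR p' / IZR q') with (f (zeta + h))
      by (rewrite <- Hfpq; f_equal; unfold h; ring).
    rewrite Rabs_minus_sym; eapply Rle_trans; [apply f_lipschitz; lra|].
    apply Rmult_le_compat_l; lra.
Qed.

Lemma image_approximation_eventually C c eps : 0 < c -> 0 < eps ->
  eventually (fun m => (1 <= m)%nat /\ / 2 ^ m < Rmin eps d /\
    psi (INR m) <= c * INR m /\ 2 * C / ln 2 < INR m).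
Proof.
  intros Hc Heps.
  repeat apply filter_and.
  - now exists 1%nat.
  - apply eventually_inv_pow2_lt; now apply Rmin_pos.
  - now apply eventually_little_o.
  - apply eventually_INR_gt.
Qed.

(* With [P = q ^ (m / 2)], the approximation [p' / q'] of [f zeta] has
   [q' <= P] and error at most [K / (P * P)]; this beats every fixed
   denominator and every fixed power of [q']. *)
Lemma image_irrational :
  ~ clusters_at0 (fun h => f (zeta + h) = f zeta) -> ~ is_rational (f zeta).
Proof.
  intros Hnacc [A [B [HB HAB]]]; apply Hnacc; intros eps Heps.
  destruct (filter_ex (F := eventually) _ (image_approximation_eventually (K * Rabs (IZR B)) (1 / 2) eps
      ltac:(lra) Heps)) as [m [Hm [Hmd [Hpsi HmC]]]].
  pose proof (Rmin_l eps d); pose proof (Rmin_r eps d).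
  destruct (image_approximation m Hm ltac:(lra))
    as [q [p' [q' [h [Hq [Hq' [Hh0 [Hh [Hfh [Hclose Hq'q]]]]]]]]]].
  exists h; repeat split; [exact Hh0|lra|].
  rewrite Hfh, HAB; apply NNPP; intro Hne.
  pose proof (rational_gap p' q' A B Hq' HB Hne) as Hgap.
  assert (Hq2 : 2 <= IZR q) by now apply IZR_le.
  assert (Hq'1 : 1 <= IZR q') by now apply IZR_le.
  assert (HBpos : 0 < Rabs (IZR B)) by (apply Rabs_pos_lt, not_0_IZR, HB).
  set (P := Rpower (IZR q) (INR m / 2)) in *.
  assert (HKP : K * Rabs (IZR B) < P) by now apply Rpower_half_gt.
  assert (Hq'P : IZR q' <= P).
  { eapply Rle_trans; [exact Hq'q|apply Rle_Rpower; lra]. }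
  rewrite pow_Rpower_half, HAB, Rabs_minus_sym in Hclose by lra; fold P in Hclose.
  pose proof (div_square_lt_inv _ _ (IZR q') ltac:(lra) Hq'P HKP) as Hsmall.
  set (X := Rabs (IZR p' / IZR q' - IZR A / IZR B)) in *.
  assert (HXB : X * Rabs (IZR B) < / IZR q').
  { eapply Rle_lt_trans; [apply Rmult_le_compat_r; [lra|exact Hclose]|].
    unfold Rdiv in *; rewrite Rmult_assoc, (Rmult_comm _ (Rabs _)), <- Rmult_assoc.
    exact Hsmall. }
  apply (Rmult_lt_compat_r (IZR q')) in HXB; [|lra].
  rewrite Rinv_l in HXB by lra; nra.
Qed.

Lemma image_liouville : ~ is_rational (f zeta) -> Liouville (f zeta).
Proof.
  intros Hirr; split; [exact Hirr|]; intros eta Heta N.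
  destruct (irrational_far_from_small_denominators _ Hirr (Z.to_nat N)) as [eps [Heps Hsep]].
  destruct (filter_ex (F := eventually) _ (image_approximation_eventually K (/ (2 * eta)) (eps / K)
      ltac:(apply Rinv_0_lt_compat; lra) ltac:(now apply Rdiv_lt_0_compat)))
    as [m [Hm [Hmd [Hpsi HmC]]]].
  pose proof (Rmin_l (eps / K) d); pose proof (Rmin_r (eps / K) d).
  destruct (image_approximation m Hm ltac:(lra))
    as [q [p' [q' [h [Hq [Hq' [_ [_ [_ [Hclose Hq'q]]]]]]]]]].
  assert (Hq2 : 2 <= IZR q) by now apply IZR_le.
  assert (Hq'1 : 1 <= IZR q') by now apply IZR_le.
  assert (HKq : K / IZR q ^ m < eps).
  { apply (Rle_lt_trans _ (K * / 2 ^ m)).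
    - apply Rmult_le_compat_l; [lra|].
      apply Rinv_le_contravar; [apply pow_lt; lra|apply pow_incr; lra].
    - replace eps with (K * (eps / K)) by (field; lra).
      apply Rmult_lt_compat_l; lra. }
  exists q', p'; split; [lia|]; split.
  - apply Z.nle_gt; intro HqN.
    assert (Hfar : eps <= Rabs (f zeta - IZR p' / IZR q')) by (apply Hsep; lia).
    lra.
  - set (P := Rpower (IZR q) (INR m / 2)) in *.
    assert (HKP : K < P) by now apply Rpower_half_gt.
    assert (Hpsi_eta : psi (INR m) * eta <= INR m / 2).
    { apply (Rmult_le_compat_r eta) in Hpsi; [|lra].
      replace (/ (2 * eta) * INR m * eta) with (INR m / 2) in Hpsi by (field; lra).
      exact Hpsi. }
    assert (Hq'P : Rpower (IZR q') eta <= P).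
    { eapply Rle_trans; [apply Rle_Rpower_l; [lra|split; [lra|exact Hq'q]]|].
      rewrite Rpower_mult; apply Rle_Rpower; lra. }
    rewrite pow_Rpower_half in Hclose by lra; fold P in Hclose.
    rewrite Rpower_Ropp; eapply Rle_trans; [exact Hclose|].
    left; apply div_square_lt_inv; [apply exp_pos|exact Hq'P|exact HKP].
Qed.

End ImageOfLiouvilleNumber.

Theorem theorem2p1 (a b : Rbar) (f : R -> R) (psi : R -> R) :
  Rbar_lt a b ->
  real_analytic_on a b f ->
  (* f is non-constant on I *)
  (exists x y, in_interval a b x /\ in_interval a b y /\ f x <> f y) ->
  (* f(Q cap I) subset Q *)
  (forall x, in_interval a b x -> is_rational x -> is_rational (f x)) ->
  (* psi : R_{>0} -> R_{>0} *)
  (forall m, 0 < m -> 0 < psi m) ->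
  (* (i) psi(m) = o(m) as m -> oo *)
  is_lim (fun m => psi m / m) p_infty 0 ->
  (* (ii) *)
  (forall zeta, Liouville zeta -> in_interval a b zeta ->
     forall m : nat, (1 <= m)%nat ->
       exists p q : Z, (2 <= p)%Z /\ (2 <= q)%Z /\ Z.gcd p q = 1%Z /\
         in_interval a b (IZR p / IZR q) /\
         Rabs (zeta - IZR p / IZR q) <= / (IZR q ^ m) /\
         exists p' q' : Z, (1 <= q')%Z /\ Z.gcd p' q' = 1%Z /\
           f (IZR p / IZR q) = IZR p' / IZR q' /\
           IZR q' <= Rpower (IZR q) (psi (INR m))) ->
  forall zeta, Liouville zeta -> in_interval a b zeta -> Liouville (f zeta).
Proof.
  intros _ Hf [x [y [Hx [Hy Hxy]]]] _ _ Hpsi Happrox zeta Hzeta Izeta.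
  destruct (real_analytic_locally_lipschitz a b f zeta Hf Izeta)
    as [K [d [HK [Hd Hlip]]]].
  assert (Hzeta_approx : forall m : nat, (1 <= m)%nat ->
    exists p q : Z, (2 <= q)%Z /\ Rabs (zeta - IZR p / IZR q) <= / IZR q ^ m /\
      exists p' q' : Z, (1 <= q')%Z /\ f (IZR p / IZR q) = IZR p' / IZR q' /\
        IZR q' <= Rpower (IZR q) (psi (INR m))).
  { intros m Hm.
    destruct (Happrox zeta Hzeta Izeta m Hm)
      as [p [q [_ [Hq [_ [_ [Hpq [p' [q' [Hq' [_ [Hfpq Hq'q]]]]]]]]]]]].
    exists p, q; split; [|split]; auto; exists p', q'; auto. }
  apply (image_liouville f psi zeta K d HK Hd Hlip (proj1 Hzeta) Hpsi Hzeta_approx).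
  apply (image_irrational f psi zeta K d HK Hd Hlip (proj1 Hzeta) Hpsi Hzeta_approx).
  intro Hconst; apply Hxy.
  now rewrite (real_analytic_identity a b f zeta _ Hf Izeta Hconst x Hx),
    (real_analytic_identity a b f zeta _ Hf Izeta Hconst y Hy).
Qed.
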